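(* The logic $\mathbf{EKPC}$ is sound and complete with respect to the class of all serial propositional Kripke models: for every finite set $\Gamma$ and formula $A$ of the propositional language, $\Gamma\vdash_{\mathbf{EKPC}}A$ iff $\Gamma\Rightarrow A$ is valid in every propositional Kripke model $(W,R,V)$ with $R$ serial.
   Context: The propositional language $\mathcal{L}_p$ has variables, constants $\top,\bot$ and connectives $\wedge,\vee,\to$. Judgements are $\Gamma\vdash A$ with $\Gamma$ a finite set of formulas. $\mathbf{KPC}$ is given by the natural-deduction assumption rule ($\Gamma\vdash A$ for $A\in\Gamma$) and the rules (premises / conclusion): $\Gamma\vdash\top$; $\Gamma\vdash\bot$ / $\Gamma\vdash A$; $\vee E$: $\Gamma\vdash A\vee B$, $\Gamma,A\vdash C$, $\Gamma,B\vdash C$ / $\Gamma\vdash C$; $\vee I$: $\Gamma\vdash A_i$ / $\Gamma\vdash A_0\vee A_1$ ($i=0,1$); $\wedge E$: $\Gamma\vdash A_0\wedge A_1$ / $\Gamma\vdash A_i$; $\wedge I$: $\Gamma\vdash A$, $\Gamma\vdash B$ / $\Gamma\vdash A\wedge B$; $\to I$: $A\vdash B$ / $\Gamma\vdash A\to B$; $(\wedge I)_f$: $\Gamma\vdash A\to B$, $\Gamma\vdash A\to C$ / $\Gamma\vdash A\to B\wedge C$; $(\vee E)_f$: $\Gamma\vdash A\to C$, $\Gamma\vdash B\to C$ / $\Gamma\vdash A\vee B\to C$; $tr_f$: $\Gamma\vdash A\to B$, $\Gamma\vdash B\to C$ / $\Gamma\vdash A\to C$. $\mathbf{EKPC}$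 is $\mathbf{KPC}$ plus the rule $E$: $\Gamma\vdash\top\to\bot$ / $\Gamma\vdash\bot$. A propositional Kripke model is $(W,R,V)$ with $W$ a set, $R\subseteq W\times W$ arbitrary, and $V$ assigning a subset of $W$ to each variable; forcing: $w\Vdash p$ iff $w\in V(p)$, $\top$ always, $\bot$ never, $\wedge,\vee$ pointwise, $w\Vdash A\to B$ iff for all $v$ with $(w,v)\in R$, $v\Vdash A$ implies $v\Vdash B$. $\Gamma\Rightarrow A$ is valid in the model if every $w$ forcing all of $\Gamma$ forces $A$. $R$ is serial if every $u$ has some $v$ with $(u,v)\in R$. *)

From Stdlib Require Import List.
Import ListNotations.

Inductive form : Type :=
| Var : nat -> form
| Top : form
| Bot : form
| And : form -> form -> form
| Or  : form -> form -> form
| Imp : form -> form -> form.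

(* Finite sets of formulas are represented by lists; membership is [In].
   "Gamma, A" is [A :: Gamma]. *)

Inductive EKPC : list form -> form -> Prop :=
| ax     : forall G A, In A G -> EKPC G A
| topI   : forall G, EKPC G Top
| botE   : forall G A, EKPC G Bot -> EKPC G A
| orE    : forall G A B C, EKPC G (Or A B) -> EKPC (A :: G) C -> EKPC (B :: G) C -> EKPC G C
| orI0   : forall G A B, EKPC G A -> EKPC G (Or A B)
| orI1   : forall G A B, EKPC G B -> EKPC G (Or A B)
| andE0  : forall G A B, EKPC G (And A B) -> EKPC G A
| andE1  : forall G A B, EKPC G (And A B) -> EKPC G B
| andI   : forall G A B, EKPC G A -> EKPC G B -> EKPC G (And A B)
| impI   : forall G A B, EKPC [A] B -> EKPC G (Imp A B)
| andIf  : forall G A B C, EKPC G (Imp A B) -> EKPC G (Imp A C) -> EKPC G (Imp A (And B C))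
| orEf   : forall G A B C, EKPC G (Imp A C) -> EKPC G (Imp B C) -> EKPC G (Imp (Or A B) C)
| trf    : forall G A B C, EKPC G (Imp A B) -> EKPC G (Imp B C) -> EKPC G (Imp A C)
| ruleE  : forall G, EKPC G (Imp Top Bot) -> EKPC G Bot.

Record model : Type := {
  world : Type;
  acc : world -> world -> Prop;
  val : nat -> world -> Prop
}.

Fixpoint forces (M : model) (w : world M) (A : form) : Prop :=
  match A with
  | Var p => val M p w
  | Top => True
  | Bot => False
  | And B C => forces M w B /\ forces M w C
  | Or B C => forces M w B \/ forces M w C
  | Imp B C => forall v, acc M w v -> forces M v B -> forces M v C
  end.

Definition valid_in (M : model) (G : list form) (A : form) : Prop :=
  forall w : world M, (forall B, In B G -> forces M w B) -> forces M w A.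

Definition serial (M : model) : Prop :=
  forall u : world M, exists v, acc M u v.

(** Soundness is a routine induction; seriality is exactly what validates rule [E].
    Completeness goes through a canonical model whose worlds are consistent prime
    theories, with [u R v] iff [v] is closed under every implication of [u]. If
    [A -> B] is not in a world [W], then [fun U Z => W (U -> Z)] is a distributive
    preorder on formulas in which [A] is not below [B], thanks to the rules
    [(/\I)_f], [(\/E)_f] and [tr_f]; the countable prime filter theorem separates
    [A] from [B] by a prime theory, which is the required successor. Rule [E] makes
    [T -> F] absent from every consistent theory, so every world has a successor. *)

From Stdlib Require Import List Classical ClassicalEpsilon Lia Cantor.
Import ListNotations.

Lemma EKPC_weaken G A : EKPC G A -> forall H, incl G H -> EKPC H A.
Proof.
  induction 1; intros K HGK; try (econstructor; eauto; fail).
  apply (orE K A B C); auto using incl_cons, in_eq, incl_tl.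
Qed.

Lemma EKPC_cut G A : EKPC G A -> forall H, (forall B, In B G -> EKPC H B) -> EKPC H A.
Proof.
  induction 1; intros K HK; try (econstructor; eauto; fail); auto.
  apply (orE K A B C); [auto | apply IHEKPC2 | apply IHEKPC3];
    intros X [<- | HX]; try (apply ax; left; reflexivity);
    apply (EKPC_weaken _ _ (HK X HX)), incl_tl, incl_refl.
Qed.

Fixpoint bigand (L : list form) : form :=
  match L with [] => Top | X :: L' => And X (bigand L') end.

Lemma EKPC_bigand_elim L H B : EKPC H (bigand L) -> In B L -> EKPC H B.
Proof.
  revert H; induction L as [| X L IHL]; simpl; [tauto |]; intros H D [<- | HB].
  - exact (andE0 _ _ _ D).
  - exact (IHL _ (andE1 _ _ _ D) HB).
Qed.

Lemma EKPC_bigand G : EKPC G (bigand G).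
Proof.
  induction G as [| X G IHG]; simpl.
  - apply topI.
  - apply andI; [apply ax, in_eq |].
    apply (EKPC_weaken _ _ IHG), incl_tl, incl_refl.
Qed.

Lemma EKPC_bigand_premise L A : EKPC L A -> EKPC [bigand L] A.
Proof.
  intro D; apply (EKPC_cut _ _ D); intros B HB.
  exact (EKPC_bigand_elim _ _ _ (ax _ _ (in_eq _ _)) HB).
Qed.

Lemma EKPC_and_or_distr X C D : EKPC [And X (Or C D)] (Or (And X C) (And X D)).
Proof.
  assert (HX : forall Y, EKPC [Y; And X (Or C D)] X)
    by (intro; eapply andE0; apply ax; right; left; reflexivity).
  eapply orE; [eapply andE1; apply ax, in_eq | |].
  - apply orI0, andI; [apply HX | apply ax, in_eq].
  - apply orI1, andI; [apply HX | apply ax, in_eq].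
Qed.

Lemma soundness G A : EKPC G A -> forall M, serial M -> valid_in M G A.
Proof.
  induction 1; intros M HM w Hw; simpl in *.
  - auto.
  - exact I.
  - destruct (IHEKPC M HM w Hw).
  - destruct (IHEKPC1 M HM w Hw) as [HA | HB].
    + apply (IHEKPC2 M HM w); intros X [<- | HX]; auto.
    + apply (IHEKPC3 M HM w); intros X [<- | HX]; auto.
  - left; exact (IHEKPC M HM w Hw).
  - right; exact (IHEKPC M HM w Hw).
  - apply (IHEKPC M HM w Hw).
  - apply (IHEKPC M HM w Hw).
  - split; [apply (IHEKPC1 M HM w Hw) | apply (IHEKPC2 M HM w Hw)].
  - intros v _ Hv; apply (IHEKPC M HM v); intros X [<- | []]; exact Hv.
  - intros v Hwv Hv; split; [apply (IHEKPC1 M HM w Hw) | apply (IHEKPC2 M HM w Hw)]; auto.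
  - intros v Hwv [Hv | Hv]; [apply (IHEKPC1 M HM w Hw) | apply (IHEKPC2 M HM w Hw)]; auto.
  - intros v Hwv Hv; apply (IHEKPC2 M HM w Hw v Hwv), (IHEKPC1 M HM w Hw v Hwv Hv).
  - destruct (HM w) as [v Hwv]; exact (IHEKPC M HM w Hw v Hwv I).
Qed.

Section PrimeFilter.

Variable T : Type.
Variable le : T -> T -> Prop.
Variables (meet join : T -> T -> T) (top : T).
Variable enum : nat -> T.

Hypothesis enum_surj : forall x, exists n, enum n = x.
Hypothesis le_refl : forall x, le x x.
Hypothesis le_trans : forall x y z, le x y -> le y z -> le x z.
Hypothesis le_meet_l : forall x y, le (meet x y) x.
Hypothesis le_meet_r : forall x y, le (meet x y) y.
Hypothesis le_meet_glb : forall x y z, le z x -> le z y -> le z (meet x y).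
Hypothesis le_top : forall x, le x top.
Hypothesis le_join_lub : forall x y z, le x z -> le y z -> le (join x y) z.
Hypothesis meet_join_distr :
  forall x y z, le (meet x (join y z)) (join (meet x y) (meet x z)).

Record prime_filter (F : T -> Prop) : Prop := {
  filter_up : forall x y, F x -> le x y -> F y;
  filter_meet : forall x y, F x -> F y -> F (meet x y);
  filter_top : F top;
  filter_prime : forall x y, F (join x y) -> F x \/ F y
}.

Lemma le_meet_mono x x' y : le x x' -> le (meet x y) (meet x' y).
Proof. intro H; apply le_meet_glb; eauto. Qed.

Variables a b : T.
Hypothesis a_not_le_b : ~ le a b.

Fixpoint chain (n : nat) : T :=
  match n with
  | 0 => a
  | S n =>
      if excluded_middle_informative (le (meet (chain n) (enum n)) b)
      then chain n else meet (chain n) (enum n)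
  end.

Definition chain_filter (x : T) : Prop := exists n, le (chain n) x.

Lemma chain_not_le n : ~ le (chain n) b.
Proof.
  induction n as [| n IHn]; simpl; [exact a_not_le_b |].
  destruct excluded_middle_informative; assumption.
Qed.

Lemma chain_antitone n m : n <= m -> le (chain m) (chain n).
Proof.
  induction 1 as [| m _ IH]; [apply le_refl |].
  apply (le_trans _ (chain m)); [simpl | exact IH].
  destruct excluded_middle_informative; auto.
Qed.

Lemma chain_filter_rejected n : ~ chain_filter (enum n) -> le (meet (chain n) (enum n)) b.
Proof.
  intro Hn; destruct (excluded_middle_informative (le (meet (chain n) (enum n)) b))
    as [Hle | Hle]; [exact Hle |].
  exfalso; apply Hn; exists (S n); simpl.
  destruct excluded_middle_informative; [contradiction | apply le_meet_r].
Qed.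

Lemma chain_filter_prime x y : chain_filter (join x y) -> chain_filter x \/ chain_filter y.
Proof.
  intros [k Hk]; apply NNPP; intros [Hx Hy]%not_or_and.
  destruct (enum_surj x) as [i <-], (enum_surj y) as [j <-].
  set (m := i + j + k).
  apply (chain_not_le m).
  assert (Hm : forall l, l <= m -> forall z, le (meet (chain m) z) (meet (chain l) z))
    by (intros; apply le_meet_mono, chain_antitone; assumption).
  apply (le_trans _ (meet (chain m) (join (enum i) (enum j)))).
  { apply le_meet_glb; [apply le_refl |].
    apply (le_trans _ (chain k)); [apply chain_antitone; lia | exact Hk]. }
  apply (le_trans _ _ _ (meet_join_distr _ _ _)), le_join_lub.
  - apply (le_trans _ _ _ (Hm i ltac:(lia) _)), chain_filter_rejected, Hx.
  - apply (le_trans _ _ _ (Hm j ltac:(lia) _)), chain_filter_rejected, Hy.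
Qed.

Theorem prime_filter_separation : exists F, prime_filter F /\ F a /\ ~ F b.
Proof.
  exists chain_filter; repeat split.
  - intros x y [n Hn] Hxy; exists n; eauto.
  - intros x y [n Hn] [m Hm]; exists (n + m); apply le_meet_glb.
    + apply (le_trans _ (chain n)); [apply chain_antitone; lia | exact Hn].
    + apply (le_trans _ (chain m)); [apply chain_antitone; lia | exact Hm].
  - exists 0; apply le_top.
  - apply chain_filter_prime.
  - exists 0; apply le_refl.
  - intros [n Hn]; exact (chain_not_le n Hn).
Qed.

End PrimeFilter.

Fixpoint form_code (A : form) : nat :=
  match A with
  | Var p => to_nat (0, p)
  | Top => to_nat (1, 0)
  | Bot => to_nat (2, 0)
  | And B C => to_nat (3, to_nat (form_code B, form_code C))
  | Or B C => to_nat (4, to_nat (form_code B, form_code C))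
  | Imp B C => to_nat (5, to_nat (form_code B, form_code C))
  end.

Lemma to_nat_inj p q : to_nat p = to_nat q -> p = q.
Proof. intro H; rewrite <- (cancel_of_to p), <- (cancel_of_to q), H; reflexivity. Qed.

Lemma form_code_inj A B : form_code A = form_code B -> A = B.
Proof.
  revert B; induction A; destruct B; intro H; cbn [form_code] in H;
    apply to_nat_inj in H; try discriminate H; try reflexivity;
    try (injection H as E; subst; reflexivity);
    apply (f_equal snd) in H; cbn [snd] in H; apply to_nat_inj in H;
    injection H as H1 H2; f_equal; auto.
Qed.

Definition form_enum (n : nat) : form :=
  match excluded_middle_informative (exists A, form_code A = n) with
  | left H => proj1_sig (constructive_indefinite_description _ H)
  | right _ => Top
  end.

Lemma form_enum_surj A : exists n, form_enum n = A.
Proof.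
  exists (form_code A); unfold form_enum.
  destruct excluded_middle_informative as [H | H]; [| exfalso; eauto].
  destruct constructive_indefinite_description as [B HB]; simpl.
  exact (form_code_inj _ _ HB).
Qed.

Definition theory (W : form -> Prop) : Prop :=
  forall L A, (forall B, In B L -> W B) -> EKPC L A -> W A.

Record prime_theory (W : form -> Prop) : Prop := {
  pt_theory : theory W;
  pt_prime : forall A B, W (Or A B) -> W A \/ W B;
  pt_consistent : ~ W Bot
}.

Lemma theory_thm W A : theory W -> EKPC [] A -> W A.
Proof. intros HW D; apply (HW [] A); [intros _ [] | exact D]. Qed.

Lemma theory_derive1 W A C : theory W -> W A -> EKPC [A] C -> W C.
Proof. intros HW HA D; apply (HW [A] C); [intros X [<- | []]; exact HA | exact D]. Qed.

Lemma theory_derive2 W A B C : theory W -> W A -> W B -> EKPC [A; B] C -> W C.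
Proof.
  intros HW HA HB D; apply (HW [A; B] C); [intros X [<- | [<- | []]]; assumption | exact D].
Qed.

Lemma bigand_mem (V : form -> Prop) :
  (forall A B, V A -> V B -> V (And A B)) -> V Top ->
  forall L, (forall B, In B L -> V B) -> V (bigand L).
Proof.
  intros Vand Vtop; induction L as [| A L IHL]; intro HL; simpl; [exact Vtop |].
  apply Vand; [apply HL, in_eq | apply IHL; intros; apply HL, in_cons; assumption].
Qed.

(* Any preorder between single-premise derivability and a relation closed under
   [/\]-introduction on the right and [\/]-elimination on the left is a
   distributive prelattice, so the prime filter theorem applies to it. *)
Lemma extend_to_prime_theory (P : form -> form -> Prop)
  (P_derive : forall U Z, EKPC [U] Z -> P U Z)
  (P_trans : forall U V Z, P U V -> P V Z -> P U Z)
  (P_andI : forall U X Y, P U X -> P U Y -> P U (And X Y))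
  (P_orE : forall X Y Z, P X Z -> P Y Z -> P (Or X Y) Z)
  A B : ~ P A B ->
  exists V, prime_theory V /\ (forall U Z, P U Z -> V U -> V Z) /\ V A /\ ~ V B.
Proof.
  intro HAB.
  destruct (prime_filter_separation form P And Or Top form_enum form_enum_surj)
    with (a := A) (b := B)
    as [V [[Vup Vand Vtop Vprime] [VA VB]]]; auto.
  - intro; apply P_derive, ax, in_eq.
  - intros; apply P_derive; eapply andE0; apply ax, in_eq.
  - intros; apply P_derive; eapply andE1; apply ax, in_eq.
  - intros; apply P_derive, topI.
  - intros; apply P_derive, EKPC_and_or_distr.
  - exists V; repeat split; eauto.
    + intros L X HL D; apply (Vup (bigand L)).
      * apply bigand_mem; assumption.
      * apply P_derive, EKPC_bigand_premise, D.
    + intro HBot; apply VB, (Vup Bot); [exact HBot |].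
      apply P_derive, botE, ax, in_eq.
Qed.

Definition canonical_model : model := {|
  world := { W : form -> Prop | prime_theory W };
  acc := fun u v => forall A B, proj1_sig u (Imp A B) -> proj1_sig v A -> proj1_sig v B;
  val := fun p w => proj1_sig w (Var p)
|}.

Lemma canonical_successor W A B : prime_theory W -> ~ W (Imp A B) ->
  exists V, prime_theory V /\ (forall U Z, W (Imp U Z) -> V U -> V Z) /\ V A /\ ~ V B.
Proof.
  intros [HW _ _] HAB.
  apply (extend_to_prime_theory (fun U Z => W (Imp U Z))); auto.
  - intros U Z D; apply theory_thm, impI; assumption.
  - intros U V Z H1 H2; apply (theory_derive2 _ _ _ _ HW H1 H2).
    eapply trf; apply ax; simpl; auto.
  - intros U X Y H1 H2; apply (theory_derive2 _ _ _ _ HW H1 H2).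
    eapply andIf; apply ax; simpl; auto.
  - intros X Y Z H1 H2; apply (theory_derive2 _ _ _ _ HW H1 H2).
    eapply orEf; apply ax; simpl; auto.
Qed.

Lemma canonical_truth A (w : world canonical_model) :
  forces canonical_model w A <-> proj1_sig w A.
Proof.
  revert w; induction A as [p | | | A1 IH1 A2 IH2 | A1 IH1 A2 IH2 | A1 IH1 A2 IH2];
    intros [W HW]; pose proof (pt_theory _ HW) as HWth; simpl in *.
  - reflexivity.
  - split; [intros _; apply theory_thm, topI; assumption | trivial].
  - split; [intros [] | apply (pt_consistent _ HW)].
  - rewrite (IH1 (exist _ W HW)), (IH2 (exist _ W HW)); simpl; split.
    + intros [H1 H2]; apply (theory_derive2 _ _ _ _ HWth H1 H2), andI; apply ax; simpl; auto.
    + intro H; split; apply (theory_derive1 _ _ _ HWth H);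
        [eapply andE0 | eapply andE1]; apply ax, in_eq.
  - rewrite (IH1 (exist _ W HW)), (IH2 (exist _ W HW)); simpl; split.
    + intros [H | H]; apply (theory_derive1 _ _ _ HWth H);
        [apply orI0 | apply orI1]; apply ax, in_eq.
    + apply (pt_prime _ HW).
  - split.
    + intro H; apply NNPP; intro HImp.
      destruct (canonical_successor W A1 A2 HW HImp) as [V [HV [Hacc [V1 V2]]]].
      apply V2, (IH2 (exist _ V HV)), H; [exact Hacc | apply (IH1 (exist _ V HV)), V1].
    + intros H v Hwv Hv; apply IH2, (Hwv A1); [exact H | apply IH1, Hv].
Qed.

Lemma canonical_serial : serial canonical_model.
Proof.
  intros [W HW].
  destruct (canonical_successor W Top Bot HW) as [V [HV [Hacc _]]].
  - intro H; apply (pt_consistent _ HW).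
    apply (theory_derive1 _ _ _ (pt_theory _ HW) H), ruleE, ax, in_eq.
  - exists (exist _ V HV); exact Hacc.
Qed.

Lemma canonical_countermodel G A : ~ EKPC G A ->
  exists w : world canonical_model,
    (forall B, In B G -> forces canonical_model w B) /\ ~ forces canonical_model w A.
Proof.
  intro HGA.
  destruct (extend_to_prime_theory (fun U Z => EKPC [U] Z)) with (A := bigand G) (B := A)
    as [V [HV [Vup [VG VA]]]]; auto.
  - intros U V Z H1 H2; apply (EKPC_cut _ _ H2); intros X [<- | []]; exact H1.
  - intros; apply andI; assumption.
  - intros X Y Z H1 H2; apply (orE _ X Y);
      [apply ax, in_eq | apply (EKPC_weaken _ _ H1) | apply (EKPC_weaken _ _ H2)];
      intros U [<- | []]; apply in_eq.
  - intro H; apply HGA, (EKPC_cut _ _ H); intros X [<- | []]; apply EKPC_bigand.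
  - exists (exist _ V HV); split.
    + intros B HB; apply canonical_truth, (Vup (bigand G)); [| exact VG].
      exact (EKPC_bigand_elim _ _ _ (ax _ _ (in_eq _ _)) HB).
    + rewrite canonical_truth; exact VA.
Qed.

Theorem theorem9p3 : forall (G : list form) (A : form),
  EKPC G A <-> (forall M : model, serial M -> valid_in M G A).
Proof.
  intros G A; split.
  - intros D M HM; exact (soundness G A D M HM).
  - intro Hvalid; apply NNPP; intro HGA.
    destruct (canonical_countermodel G A HGA) as [w [HwG HwA]].
    exact (HwA (Hvalid canonical_model canonical_serial w HwG)).
Qed.
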